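(* Let $A\subseteq\mathbb{N}$ and let $f\colon\deg_e(A)\to\mathcal{P}(\mathbb{N})$ be uniformly $e$-invariant and not constant. Then there is $B\in\deg_e(A)$ such that $f(A\oplus B)\neq f(A\oplus\varnothing)$ or $f(A\oplus B)\neq f(\varnothing\oplus B)$.
   Context: $X\oplus Y=\{2n:n\in X\}\cup\{2n+1:n\in Y\}$. Enumeration reducibility: for $A,B\subseteq\mathbb{N}$, $A\le_e B$ if $A=\Gamma(B):=\{n:\exists D\subseteq B,\ \langle n,D\rangle\in\Gamma\}$ for some c.e. set $\Gamma$ of pairs $\langle n,D\rangle$ with $D$ finite (canonical index); $(\Gamma_i)_{i\in\mathbb{N}}$ is the standard computable numbering of these enumeration operators. $A\equiv_e B$ iff $A\le_e B\le_e A$; $\deg_e(A)=\{B: B\equiv_e A\}$. Let $\mathcal{X}\subseteq\mathcal{P}(\mathbb{N})$ be closed under $\equiv_e$. A function $f\colon\mathcal{X}\to\mathcal{P}(\mathbb{N})$ is $e$-invariant if $A\equiv_e B$ implies $f(A)\equiv_e f(B)$. Write $A\equiv_e B$ via $\langle i,j\rangle$ if $\Gamma_i(A)=B$ and $\Gamma_j(B)=A$ (with $\langle\cdot,\cdot\rangle$ a fixed computable pairing bijection). A function $u\colon\mathbb{N}\to\mathbb{N}$ is a uniformity function for $f$ if for all $A,B\in\mathcal{X}$ and all $i,j$, whenever $A\equiv_e B$ via $\langle i,j\rangle$ then $f(A)\equiv_e f(B)$ via $u(\langle i,j\rangle)$. $f$ is uniformly $e$-invariant if it has some uniformity function. ''Not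 constant'' means there are $C,D\in\deg_e(A)$ with $f(C)\neq f(D)$. *)

From mathcomp Require Import all_boot.
Set Implicit Arguments.
Unset Strict Implicit.
Unset Printing Implicit Defensive.

Definition natset := nat -> bool.

Definition emptyset : natset := fun _ => false.

Definition join (X Y : natset) : natset :=
  fun m => if odd m then Y m./2 else X m./2.

Definition cpair (a b : nat) : nat := ((a + b) * (a + b).+1) %/ 2 + b.

(* canonical index: D_x = { k | bit k of x is 1 } *)
Definition canon (x : nat) : nat -> bool := fun k => Nat.testbit x k.

Inductive prf : Type :=
| PZero : prf
| PSucc : prf
| PProj : nat -> prf
| PComp : prf -> seq prf -> prf
| PRec  : prf -> prf -> prf
| PMu   : prf -> prf.

Inductive eval : prf -> seq nat -> nat -> Prop :=
| ev_zero v : eval PZero v 0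
| ev_succ v : eval PSucc v (head 0 v).+1
| ev_proj i v : eval (PProj i) v (nth 0 v i)
| ev_comp f gs v ws y : evals gs v ws -> eval f ws y -> eval (PComp f gs) v y
| ev_rec0 f g v y : eval f v y -> eval (PRec f g) (0 :: v) y
| ev_recS f g n v z y :
    eval (PRec f g) (n :: v) z -> eval g (n :: z :: v) y ->
    eval (PRec f g) (n.+1 :: v) y
| ev_mu f v n :
    eval f (n :: v) 0 -> (forall m, m < n -> exists k, eval f (m :: v) k.+1) ->
    eval (PMu f) v n
with evals : seq prf -> seq nat -> seq nat -> Prop :=
| evs_nil v : evals [::] v [::]
| evs_cons g gs v w ws : eval g v w -> evals gs v ws -> evals (g :: gs) v (w :: ws).

(* decoding of codes from generic trees (GenTree.tree nat is a countType) *)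
Fixpoint decode (t : GenTree.tree nat) : prf :=
  match t with
  | GenTree.Leaf i => PProj i
  | GenTree.Node 0 _ => PZero
  | GenTree.Node 1 _ => PSucc
  | GenTree.Node 2 (f :: gs) => PComp (decode f) (map decode gs)
  | GenTree.Node 3 (f :: g :: _) => PRec (decode f) (decode g)
  | GenTree.Node 4 (f :: _) => PMu (decode f)
  | GenTree.Node _ _ => PZero
  end.

Definition program (e : nat) : prf :=
  match (unpickle e : option (GenTree.tree nat)) with
  | Some t => decode t
  | None => PZero
  end.

Definition W (e : nat) (x : nat) : Prop := exists y, eval (program e) [:: x] y.

(* Gamma_i(A) = { n | exists D finite, D subset A, <n, D> in W_i } *)
Definition Gamma (i : nat) (A : natset) (n : nat) : Prop :=
  exists x, W i (cpair n x) /\ (forall k, canon x k -> A k).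

Definition Gamma_eq (i : nat) (A B : natset) : Prop :=
  forall n, Gamma i A n <-> B n.

Definition e_le (A B : natset) : Prop := exists i, Gamma_eq i B A.
Definition e_equiv (A B : natset) : Prop := e_le A B /\ e_le B A.

Definition deg_e (A : natset) : natset -> Prop := fun B => e_equiv B A.

Definition equiv_via (k : nat) (A B : natset) : Prop :=
  exists i j, k = cpair i j /\ Gamma_eq i A B /\ Gamma_eq j B A.

Definition uniformity_function (X : natset -> Prop) (f : natset -> natset)
    (u : nat -> nat) : Prop :=
  forall A B, X A -> X B -> forall i j,
    equiv_via (cpair i j) A B -> equiv_via (u (cpair i j)) (f A) (f B).

Definition uniformly_e_invariant (X : natset -> Prop) (f : natset -> natset) : Prop :=
  exists u, uniformity_function X f u.

Definition not_constant_on (X : natset -> Prop) (f : natset -> natset) : Prop :=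
  exists C D, X C /\ X D /\ f C <> f D.

(* If the conclusion failed, then f (A (+) B) = f (A (+) 0) = f (0 (+) B) for every
   B in deg_e(A), so f (0 (+) B) would be one and the same set c for all such B.
   Now B and 0 (+) B are e-equivalent via a fixed pair of enumeration operators,
   independent of B, so the uniformity function yields a single operator Gamma_j
   with Gamma_j(f (0 (+) B)) = f B, i.e. f B = Gamma_j(c) for every B in the degree,
   contradicting that f is not constant. *)

From Stdlib Require Import PeanoNat Classical FunctionalExtensionality.
From mathcomp Require Import all_boot zify.
Set Implicit Arguments.
Unset Strict Implicit.
Unset Printing Implicit Defensive.

Definition computes (c : prf) (F : seq nat -> nat) : Prop :=
  forall v y, eval c v y <-> y = F v.

Definition computes_all (gs : seq prf) (Fs : seq nat -> seq nat) : Prop :=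
  forall v ws, evals gs v ws <-> ws = Fs v.

Lemma eval_compE f gs v y :
  eval (PComp f gs) v y <-> exists2 ws, evals gs v ws & eval f ws y.
Proof.
split=> [H|[ws hgs hf]]; last exact: ev_comp hgs hf.
by inversion H; exists ws.
Qed.

Lemma eval_rec0E f g v y : eval (PRec f g) (0 :: v) y <-> eval f v y.
Proof. by split=> [H|H]; [inversion H | constructor]. Qed.

Lemma eval_recSE f g n v y :
  eval (PRec f g) (n.+1 :: v) y <->
  exists2 z, eval (PRec f g) (n :: v) z & eval g (n :: z :: v) y.
Proof.
split=> [H|[z hz hg]]; last exact: ev_recS hz hg.
by inversion H; exists z.
Qed.

Lemma eval_muE f v n :
  eval (PMu f) v n <->
  eval f (n :: v) 0 /\ forall m, m < n -> exists k, eval f (m :: v) k.+1.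
Proof. by split=> [H|[h0 h1]]; [inversion H | constructor]. Qed.

Lemma computes_zero : computes PZero (fun _ => 0).
Proof. by move=> v y; split=> [H|->]; [inversion H | constructor]. Qed.

Lemma computes_succ : computes PSucc (fun v => (head 0 v).+1).
Proof. by move=> v y; split=> [H|->]; [inversion H | constructor]. Qed.

Lemma computes_proj i : computes (PProj i) (fun v => nth 0 v i).
Proof. by move=> v y; split=> [H|->]; [inversion H | constructor]. Qed.

Lemma computes_ext c F G : computes c F -> F =1 G -> computes c G.
Proof. by move=> hc eFG v y; rewrite -eFG. Qed.

Lemma computes_all_nil : computes_all [::] (fun _ => [::]).
Proof. by move=> v ws; split=> [H|->]; [inversion H | constructor]. Qed.

Lemma computes_all_cons g gs G Gs : computes g G -> computes_all gs Gs ->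
  computes_all (g :: gs) (fun v => G v :: Gs v).
Proof.
move=> hg hgs v ws; split=> [H|->]; last by constructor; [apply/hg | apply/hgs].
by inversion H as [|? ? ? w ws' hw hws]; move: hw hws => /hg -> /hgs ->.
Qed.

Lemma computes_comp_on f gs Gs F : computes_all gs Gs ->
  (forall v y, eval f (Gs v) y <-> y = F v) -> computes (PComp f gs) F.
Proof.
move=> hgs hf v y; rewrite eval_compE -hf.
by split=> [[ws /hgs -> //]|hy]; exists (Gs v) => //; apply/hgs.
Qed.

Lemma computes_comp1 f F c C : computes f F -> computes c C ->
  computes (PComp f [:: c]) (fun v => F [:: C v]).
Proof.
move=> hf hc; apply: computes_comp_on (computes_all_cons hc computes_all_nil) _.
by move=> v; apply: hf.
Qed.

Fixpoint prim_rec (F G : seq nat -> nat) n v :=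
  if n is n'.+1 then G (n' :: prim_rec F G n' v :: v) else F v.

Lemma computes_rec f g F G : computes f F -> computes g G ->
  forall n v y, eval (PRec f g) (n :: v) y <-> y = prim_rec F G n v.
Proof.
move=> hf hg; elim=> [|n IH] v y; first by rewrite eval_rec0E hf.
rewrite eval_recSE /=; split=> [[z /IH -> /hg //]|->].
by exists (prim_rec F G n v); [apply/IH | apply/hg].
Qed.

Lemma computes_rec1 f g F G c C : computes f F -> computes g G -> computes c C ->
  computes (PComp (PRec f g) [:: c]) (fun v => prim_rec F G (C v) [::]).
Proof.
move=> hf hg hc; apply: computes_comp_on (computes_all_cons hc computes_all_nil) _.
by move=> v; apply: computes_rec.
Qed.

Lemma computes_rec2 f g F G c1 C1 c2 C2 :
  computes f F -> computes g G -> computes c1 C1 -> computes c2 C2 ->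
  computes (PComp (PRec f g) [:: c1; c2]) (fun v => prim_rec F G (C1 v) [:: C2 v]).
Proof.
move=> hf hg h1 h2.
apply: computes_comp_on (computes_all_cons h1 (computes_all_cons h2 computes_all_nil)) _.
by move=> v; apply: computes_rec.
Qed.

Lemma eval_mu_total f F v n : computes f F ->
  eval (PMu f) v n <-> F (n :: v) = 0 /\ forall m, m < n -> F (m :: v) <> 0.
Proof.
move=> hf; rewrite eval_muE hf; split=> -[h0 h1]; split=> // m /h1.
- by case=> k /hf <-.
- by move=> hm; exists (F (m :: v)).-1; apply/hf; rewrite prednK // lt0n; apply/eqP.
Qed.

(** * Arithmetic programs *)

Definition psucc c := PComp PSucc [:: c].
Definition pone := psucc PZero.
Definition padd c1 c2 := PComp (PRec (PProj 0) (psucc (PProj 1))) [:: c1; c2].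
Definition ppred c := PComp (PRec PZero (PProj 0)) [:: c].
Definition psub c1 c2 := PComp (PRec (PProj 0) (ppred (PProj 1))) [:: c2; c1].
Definition pmul c1 c2 := PComp (PRec PZero (padd (PProj 1) (PProj 2))) [:: c1; c2].
Definition podd c := PComp (PRec PZero (psub pone (PProj 1))) [:: c].
Definition phalf c := PComp (PRec PZero (padd (PProj 1) (podd (PProj 0)))) [:: c].
Definition pbit x k := podd (PComp (PRec (PProj 0) (phalf (PProj 1))) [:: k; x]).
Definition ppow2 c := PComp (PRec pone (padd (PProj 1) (PProj 1))) [:: c].

Fixpoint tri n := if n is n'.+1 then tri n' + n'.+1 else 0.
Definition ptri c := PComp (PRec PZero (padd (PProj 1) (psucc (PProj 0)))) [:: c].

Lemma computes_psucc c C : computes c C -> computes (psucc c) (fun v => (C v).+1).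
Proof. exact: computes_comp1 computes_succ. Qed.

Lemma computes_pone : computes pone (fun _ => 1).
Proof. exact: computes_psucc computes_zero. Qed.

Lemma computes_padd c1 C1 c2 C2 : computes c1 C1 -> computes c2 C2 ->
  computes (padd c1 c2) (fun v => C1 v + C2 v).
Proof.
move=> h1 h2; apply: computes_ext
  (computes_rec2 (computes_proj 0) (computes_psucc (computes_proj 1)) h1 h2) _.
by move=> v /=; elim: (C1 v) => //= n ->.
Qed.

Lemma computes_ppred c C : computes c C -> computes (ppred c) (fun v => (C v).-1).
Proof.
move=> h; apply: computes_ext (computes_rec1 computes_zero (computes_proj 0) h) _.
by move=> v /=; case: (C v).
Qed.

Lemma computes_psub c1 C1 c2 C2 : computes c1 C1 -> computes c2 C2 ->
  computes (psub c1 c2) (fun v => C1 v - C2 v).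
Proof.
move=> h1 h2; apply: computes_ext
  (computes_rec2 (computes_proj 0) (computes_ppred (computes_proj 1)) h2 h1) _.
by move=> v /=; elim: (C2 v) => /= [|n ->]; rewrite ?subn0 ?subnS.
Qed.

Lemma computes_pmul c1 C1 c2 C2 : computes c1 C1 -> computes c2 C2 ->
  computes (pmul c1 c2) (fun v => C1 v * C2 v).
Proof.
move=> h1 h2; apply: computes_ext (computes_rec2 computes_zero
  (computes_padd (computes_proj 1) (computes_proj 2)) h1 h2) _.
by move=> v /=; elim: (C1 v) => //= n ->; rewrite mulSn addnC.
Qed.

Lemma computes_podd c C : computes c C -> computes (podd c) (fun v => odd (C v)).
Proof.
move=> h; apply: computes_ext (computes_rec1 computes_zero
  (computes_psub computes_pone (computes_proj 1)) h) _.
by move=> v /=; elim: (C v) => //= n ->; case: (odd n).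
Qed.

Lemma computes_phalf c C : computes c C -> computes (phalf c) (fun v => (C v)./2).
Proof.
move=> h; apply: computes_ext (computes_rec1 computes_zero
  (computes_padd (computes_proj 1) (computes_podd (computes_proj 0))) h) _.
by move=> v /=; elim: (C v) => //= n ->; rewrite uphalf_half addnC.
Qed.

Lemma odd_iter_half k x : odd (iter k half x) = Nat.testbit x k.
Proof.
have odd_Nat n : Nat.odd n = odd n.
  by elim: n => // n IH; rewrite Nat.odd_succ -Nat.negb_odd IH.
have div2_half n : Nat.div2 n = n./2.
  by elim: n {-2}n (leqnn n) => [|m IH] [|[|n]] //= hn; rewrite IH //; lia.
elim: k x => [|k IH] x; first by rewrite /= odd_Nat.
by rewrite iterSr IH /= div2_half.
Qed.

Lemma computes_pbit x X k K : computes x X -> computes k K ->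
  computes (pbit x k) (fun v => Nat.testbit (X v) (K v)).
Proof.
move=> hx hk; apply: computes_ext (computes_podd (computes_rec2 (computes_proj 0)
  (computes_phalf (computes_proj 1)) hk hx)) _.
move=> v /=; rewrite -odd_iter_half; congr (nat_of_bool (odd _)).
by elim: (K v) => //= n ->.
Qed.

Lemma computes_ppow2 c C : computes c C -> computes (ppow2 c) (fun v => 2 ^ C v).
Proof.
move=> h; apply: computes_ext (computes_rec1 computes_pone
  (computes_padd (computes_proj 1) (computes_proj 1)) h) _.
by move=> v /=; elim: (C v) => //= n ->; rewrite expnS mul2n addnn.
Qed.

Lemma computes_ptri c C : computes c C -> computes (ptri c) (fun v => tri (C v)).
Proof.
move=> h; apply: computes_ext (computes_rec1 computes_zero
  (computes_padd (computes_proj 1) (computes_psucc (computes_proj 0))) h) _.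
by move=> v /=; elim: (C v) => //= n ->.
Qed.

(** * Inverting the Cantor pairing *)

Lemma tri_mono : {homo tri : a b / a <= b}.
Proof.
move=> a b /subnKC <-; elim: (b - a) => [|n IH]; first by rewrite addn0.
rewrite addnS /=; lia.
Qed.

Lemma triE n : tri n = n * n.+1 %/ 2.
Proof.
suff -> : n * n.+1 = tri n * 2 by rewrite mulnK.
by elim: n => //= n IH; nia.
Qed.

Lemma cpairE a b : cpair a b = tri (a + b) + b.
Proof. by rewrite /cpair triE. Qed.

Fixpoint diag m :=
  if m is m'.+1 then
    if m < tri (diag m').+1 then diag m' else (diag m').+1
  else 0.

Lemma diag_spec m : tri (diag m) <= m < tri (diag m).+1.
Proof.
elim: m => //= m /andP [lo hi].
by case: ifP => /= h; apply/andP; split; lia.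
Qed.

Lemma diag_uniq w m : tri w <= m < tri w.+1 -> diag m = w.
Proof.
move=> hw; have := diag_spec m.
by case: (ltngtP w (diag m)) => // /tri_mono; lia.
Qed.

Definition unpair2 m := m - tri (diag m).
Definition unpair1 m := diag m - unpair2 m.

Lemma diag_cpair a b : diag (cpair a b) = a + b.
Proof. by apply: diag_uniq; rewrite cpairE /=; lia. Qed.

Lemma unpair2_cpair a b : unpair2 (cpair a b) = b.
Proof. by rewrite /unpair2 diag_cpair cpairE; lia. Qed.

Lemma unpair1_cpair a b : unpair1 (cpair a b) = a.
Proof. by rewrite /unpair1 unpair2_cpair diag_cpair; lia. Qed.

(* [diag m] is found as the least [w] with [m < tri w.+1]. *)
Definition pdiag c :=
  PComp (PMu (psub (psucc (PProj 1)) (ptri (psucc (PProj 0))))) [:: c].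
Definition punpair2 c := psub c (ptri (pdiag c)).
Definition punpair1 c := psub (pdiag c) (punpair2 c).
Definition pcpair a b := padd (ptri (padd a b)) b.

Lemma computes_pdiag c C : computes c C -> computes (pdiag c) (fun v => diag (C v)).
Proof.
have hF := computes_psub (computes_psucc (computes_proj 1))
  (computes_ptri (computes_psucc (computes_proj 0))).
apply: (computes_comp1 (F := fun w => diag (nth 0 w 0))) => w y.
rewrite (eval_mu_total _ _ hF) /=; have /andP [lo hi] := diag_spec (nth 0 w 0).
split.
- move=> [h0 h1]; symmetry; apply: diag_uniq; apply/andP; split=> /=; last by lia.
  by case: y h0 h1 => //= k _ /(_ k (ltnSn k)); lia.
- by move: hi => /= hi ->; split=> [|k /tri_mono /=]; lia.
Qed.

Lemma computes_punpair2 c C : computes c C -> computes (punpair2 c) (fun v => unpair2 (C v)).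
Proof. by move=> h; apply: computes_psub h (computes_ptri (computes_pdiag h)). Qed.

Lemma computes_punpair1 c C : computes c C -> computes (punpair1 c) (fun v => unpair1 (C v)).
Proof. by move=> h; apply: computes_psub (computes_pdiag h) (computes_punpair2 h). Qed.

Lemma computes_pcpair a A b B : computes a A -> computes b B ->
  computes (pcpair a b) (fun v => cpair (A v) (B v)).
Proof.
move=> ha hb; apply: computes_ext (computes_padd (computes_ptri (computes_padd ha hb)) hb) _.
by move=> v; rewrite cpairE.
Qed.

(** * Canonical indices *)

Lemma pow2E n : Nat.pow 2 n = 2 ^ n.
Proof. by elim: n => //= n ->; rewrite expnS. Qed.

Lemma testbit_small a p j : a < 2 ^ p -> p <= j -> Nat.testbit a j = false.
Proof.
move=> /ltP; rewrite -pow2E => /Nat.mod_small <- /leP.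
exact: Nat.mod_pow2_bits_high.
Qed.

Lemma testbit_lt a k : Nat.testbit a k -> k < a.
Proof.
rewrite ltnNge; apply: contraTN => le_ak; apply/negbT/(testbit_small _ (leqnn k)).
exact: leq_ltn_trans le_ak (ltn_expl k (isT : 1 < 2)).
Qed.

Lemma testbit_add_pow2 a p j : a < 2 ^ p ->
  Nat.testbit (a + 2 ^ p) j = (p == j) || Nat.testbit a j.
Proof.
move=> ha; rewrite -pow2E.
have disj : Nat.land a (Nat.pow 2 p) = 0.
  apply: Nat.bits_inj => i; rewrite Nat.land_spec Nat.pow2_bits_eqb Nat.bits_0.
  by case: (Nat.eqb_spec p i) => [<-|_]; rewrite ?andbF // (testbit_small ha).
have -> : a + Nat.pow 2 p = Nat.lxor a (Nat.pow 2 p) by rewrite -Nat.add_nocarry_lxor.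
rewrite Nat.lxor_spec Nat.pow2_bits_eqb.
case: (Nat.eqb_spec p j) => [<-|/eqP/negbTE ->]; last by case: Nat.testbit.
by rewrite (testbit_small ha) ?eqxx.
Qed.

Fixpoint code_below (P : nat -> bool) n :=
  if n is n'.+1 then code_below P n' + P n' * 2 ^ n' else 0.

Lemma code_below_lt P n : code_below P n < 2 ^ n.
Proof. by elim: n => //= n IH; rewrite expnS; case: (P n) => /=; lia. Qed.

Lemma testbit_code_below P n k : Nat.testbit (code_below P n) k = (k < n) && P k.
Proof.
elim: n => [|n IH] /=; first by rewrite Nat.bits_0.
rewrite ltnS leq_eqVlt; case: (boolP (P n)) => Pn.
- rewrite mul1n testbit_add_pow2 ?code_below_lt // IH eq_sym.
  by case: eqP => [->|]; rewrite ?Pn.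
- rewrite mul0n addn0 IH.
  by case: eqP => [->|]; rewrite ?ltnn ?(negbTE Pn) ?andbF.
Qed.

Definition odd_bits y := code_below (fun k => Nat.testbit y k.*2.+1) y.

Lemma testbit_odd_bits y k : Nat.testbit (odd_bits y) k = Nat.testbit y k.*2.+1.
Proof.
rewrite testbit_code_below andb_idl // => /testbit_lt; rewrite -addnn; lia.
Qed.

Definition spread x := code_below (fun j => odd j && Nat.testbit x j./2) x.*2.

Lemma testbit_spread x j : Nat.testbit (spread x) j = odd j && Nat.testbit x j./2.
Proof.
rewrite testbit_code_below andb_idl // => /andP [_ /testbit_lt].
by have := odd_double_half j; case: (odd j) => /=; lia.
Qed.

Lemma odd_bits_spread x : odd_bits (spread x) = x.
Proof.
apply: Nat.bits_inj => k.
by rewrite testbit_odd_bits testbit_spread /= odd_double uphalf_double.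
Qed.

Definition podd_bits c := PComp (PRec PZero (padd (PProj 1)
  (pmul (pbit (PProj 2) (psucc (padd (PProj 0) (PProj 0)))) (ppow2 (PProj 0)))))
  [:: c; c].

Lemma computes_podd_bits c C : computes c C ->
  computes (podd_bits c) (fun v => odd_bits (C v)).
Proof.
move=> h; apply: computes_ext (computes_rec2 computes_zero (computes_padd (computes_proj 1)
  (computes_pmul (computes_pbit (computes_proj 2)
     (computes_psucc (computes_padd (computes_proj 0) (computes_proj 0))))
   (computes_ppow2 (computes_proj 0)))) h h) _.
by move=> v; rewrite /odd_bits; elim: {1 4}(C v) => //= n ->; rewrite addnn.
Qed.

Fixpoint encode (c : prf) : GenTree.tree nat :=
  match c with
  | PZero => GenTree.Node 0 [::]
  | PSucc => GenTree.Node 1 [::]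
  | PProj i => GenTree.Leaf i
  | PComp f gs => GenTree.Node 2 (encode f :: map encode gs)
  | PRec f g => GenTree.Node 3 [:: encode f; encode g]
  | PMu f => GenTree.Node 4 [:: encode f]
  end.

Lemma encodeK : cancel encode decode.
Proof.
rewrite /cancel; fix IH 1; case=> [| |i|f gs|f g|f] //=; rewrite ?IH //.
by congr PComp; elim: gs => //= g gs ->; rewrite IH.
Qed.

Definition index_of c := pickle (encode c).

Lemma program_index_of c : program (index_of c) = c.
Proof. by rewrite /program /index_of pickleK encodeK. Qed.

(** * Enumeration operators for the join with the empty set *)

Definition halts c v := exists y, eval c v y.

Definition pguard h := PMu (PComp h [:: PProj 1]).
Definition pboth c1 c2 := PComp (PProj 0) [:: c1; c2].

Lemma halts_pguard h H m : computes h H ->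
  halts (pguard h) [:: m] <-> H [:: m] = 0.
Proof.
move=> hh; have hf := computes_comp1 hh (computes_proj 1).
split=> [[y /(eval_mu_total _ _ hf) [] //]|H0].
by exists 0; apply/(eval_mu_total _ _ hf).
Qed.

Lemma halts_pboth c1 c2 v : halts (pboth c1 c2) v <-> halts c1 v /\ halts c2 v.
Proof.
split=> [[y /eval_compE [ws hws _]]|[[y1 h1] [y2 h2]]].
  inversion hws as [|? ? ? y1 ? h1 hws2]; inversion hws2 as [|? ? ? y2 ? h2].
  by split; [exists y1 | exists y2].
exists y1; apply/eval_compE; exists [:: y1; y2]; first by do !constructor.
exact/(computes_proj 0).
Qed.

Lemma halts_comp1 f c C v : computes c C ->
  halts (PComp f [:: c]) v <-> halts f [:: C v].
Proof.
move=> hc; have hcs := computes_all_cons hc computes_all_nil.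
split=> [[y /eval_compE [ws /hcs -> hf]]|[y hf]]; exists y => //.
by apply/eval_compE; exists [:: C v] => //; apply/hcs.
Qed.

Definition pfst := punpair1 (PProj 0).
Definition psnd := punpair2 (PProj 0).

Lemma computes_pfst : computes pfst (fun v => unpair1 (nth 0 v 0)).
Proof. exact: computes_punpair1 (computes_proj 0). Qed.

Lemma computes_psnd : computes psnd (fun v => unpair2 (nth 0 v 0)).
Proof. exact: computes_punpair2 (computes_proj 0). Qed.

Definition to_join_prg :=
  pguard (psub (psucc pone) (padd (podd pfst) (pbit psnd (phalf pfst)))).
Definition from_join_prg := pguard (psub pone (pbit psnd (psucc (padd pfst pfst)))).
Definition into_join_prg c :=
  pboth (pguard (psub pone (podd pfst))) (PComp c [:: pcpair (phalf pfst) psnd]).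
Definition out_of_join_prg c := PComp c [:: pcpair pfst (podd_bits psnd)].

Lemma halts_to_join_prg n x :
  halts to_join_prg [:: cpair n x] <-> odd n && Nat.testbit x n./2.
Proof.
rewrite (halts_pguard _ (computes_psub (computes_psucc computes_pone)
  (computes_padd (computes_podd computes_pfst)
     (computes_pbit computes_psnd (computes_phalf computes_pfst))))) /=.
by rewrite unpair1_cpair unpair2_cpair; case: (odd n); case: Nat.testbit.
Qed.

Lemma halts_from_join_prg n x :
  halts from_join_prg [:: cpair n x] <-> Nat.testbit x n.*2.+1.
Proof.
rewrite (halts_pguard _ (computes_psub computes_pone (computes_pbit computes_psnd
  (computes_psucc (computes_padd computes_pfst computes_pfst))))) /=.
by rewrite unpair1_cpair unpair2_cpair addnn; case: Nat.testbit.
Qed.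

Lemma halts_into_join_prg c n x :
  halts (into_join_prg c) [:: cpair n x] <-> odd n /\ halts c [:: cpair n./2 x].
Proof.
rewrite halts_pboth
  (halts_pguard _ (computes_psub computes_pone (computes_podd computes_pfst))).
rewrite (halts_comp1 _ _ (computes_pcpair (computes_phalf computes_pfst) computes_psnd)) /=.
by rewrite unpair1_cpair unpair2_cpair; case: (odd n); split=> -[].
Qed.

Lemma halts_out_of_join_prg c n x :
  halts (out_of_join_prg c) [:: cpair n x] <-> halts c [:: cpair n (odd_bits x)].
Proof.
rewrite (halts_comp1 _ _ (computes_pcpair computes_pfst (computes_podd_bits computes_psnd))).
by rewrite /= unpair1_cpair unpair2_cpair.
Qed.

Lemma canon_pow2 k j : canon (Nat.pow 2 k) j = (k == j).
Proof.
rewrite /canon Nat.pow2_bits_eqb.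
by case: Nat.eqb_spec => [->|/eqP/negbTE ->]; rewrite ?eqxx.
Qed.

Lemma join_doubleS X Y n : join X Y n.*2.+1 = Y n.
Proof. by rewrite /join /= odd_double uphalf_double. Qed.

Lemma W_program e c x : program e = c -> W e x <-> halts c [:: x].
Proof. by rewrite /W => ->. Qed.

(* The next lemmas take an arbitrary index [e] of the program rather than
   [index_of _]: tactics such as [case: ifP] would try to evaluate that pickle. *)

Lemma Gamma_to_join e X :
  program e = to_join_prg -> Gamma_eq e X (join emptyset X).
Proof.
move=> pe n; split.
- move=> [x [/(W_program _ pe)/halts_to_join_prg/andP [odd_n bit_x] sub_x]].
  by rewrite /join odd_n; apply: sub_x.
- rewrite /join; case: ifP => // odd_n Xn; exists (Nat.pow 2 n./2); split.
  + by apply/(W_program _ pe)/halts_to_join_prg; rewrite odd_n Nat.pow2_bits_true.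
  + by move=> k; rewrite canon_pow2 => /eqP <-.
Qed.

Lemma Gamma_from_join e X :
  program e = from_join_prg -> Gamma_eq e (join emptyset X) X.
Proof.
move=> pe n; split.
- move=> [x [/(W_program _ pe)/halts_from_join_prg bit_x sub_x]].
  by rewrite -(join_doubleS emptyset); apply: sub_x.
- move=> Xn; exists (Nat.pow 2 n.*2.+1); split.
  + by apply/(W_program _ pe)/halts_from_join_prg; rewrite Nat.pow2_bits_true.
  + by move=> k; rewrite canon_pow2 => /eqP <-; rewrite join_doubleS.
Qed.

Lemma Gamma_into_join e i A C : program e = into_join_prg (program i) ->
  Gamma_eq i A C -> Gamma_eq e A (join emptyset C).
Proof.
move=> pe hi n; split.
- move=> [x [/(W_program _ pe)/halts_into_join_prg [odd_n Wx] sub_x]].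
  by rewrite /join odd_n; apply/hi; exists x.
- rewrite /join; case: ifP => // odd_n /hi [x [Wx sub_x]].
  by exists x; split=> //; apply/(W_program _ pe)/halts_into_join_prg.
Qed.

(* A finite subset [D] of [C] corresponds to the finite subset [{2k+1 | k in D}]
   of [join emptyset C], whose index is [spread]; [odd_bits] inverts it. *)
Lemma Gamma_out_of_join e j A C : program e = out_of_join_prg (program j) ->
  Gamma_eq j C A -> Gamma_eq e (join emptyset C) A.
Proof.
move=> pe hj n; split.
- move=> [y [/(W_program _ pe)/halts_out_of_join_prg Wy sub_y]].
  apply/hj; exists (odd_bits y); split=> // k.
  by rewrite /canon testbit_odd_bits => /sub_y; rewrite join_doubleS.
- move=> /hj [x [Wx sub_x]]; exists (spread x); split.
  + by apply/(W_program _ pe)/halts_out_of_join_prg; rewrite odd_bits_spread.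
  + by move=> k; rewrite /canon testbit_spread /join => /andP [-> /sub_x].
Qed.

Lemma deg_e_join_empty A C : deg_e A C -> deg_e A (join emptyset C).
Proof.
move=> [[i hi] [j hj]]; split.
- by exists (index_of (into_join_prg (program i)));
    apply: Gamma_into_join (program_index_of _) hi.
- by exists (index_of (out_of_join_prg (program j)));
    apply: Gamma_out_of_join (program_index_of _) hj.
Qed.

Definition op_to_join := index_of to_join_prg.
Definition op_from_join := index_of from_join_prg.

Lemma equiv_via_join_empty X :
  equiv_via (cpair op_to_join op_from_join) X (join emptyset X).
Proof.
exists op_to_join, op_from_join; split=> //; split.
- exact: Gamma_to_join (program_index_of _).
- exact: Gamma_from_join (program_index_of _).
Qed.

Lemma Gamma_eq_uniq i X Y Z : Gamma_eq i X Y -> Gamma_eq i X Z -> Y = Z.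
Proof.
move=> hY hZ; apply: functional_extensionality => n.
by apply/idP/idP => [/hY/hZ|/hZ/hY].
Qed.

Lemma uniform_join_empty A f u : uniformity_function (deg_e A) f u ->
  exists j, forall B, deg_e A B -> Gamma_eq j (f (join emptyset B)) (f B).
Proof.
move=> hu; exists (unpair2 (u (cpair op_to_join op_from_join))) => B hB.
have [i [j [-> [_ hj]]]] :=
  hu _ _ hB (deg_e_join_empty hB) _ _ (equiv_via_join_empty B).
by rewrite unpair2_cpair.
Qed.

Theorem lemma5p3 (A : natset) (f : natset -> natset) :
  uniformly_e_invariant (deg_e A) f ->
  not_constant_on (deg_e A) f ->
  exists B, deg_e A B /\
    (f (join A B) <> f (join A emptyset) \/ f (join A B) <> f (join emptyset B)).
Proof.
move=> [u hu] [C [D [hC [hD fCD]]]]; apply: NNPP => no_B.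
have f_join_empty B : deg_e A B -> f (join emptyset B) = f (join A emptyset).
  move=> hB; apply: NNPP => ne; apply: no_B; exists B; split=> //.
  case: (classic (f (join A B) = f (join A emptyset))) => [eAB|]; last by left.
  by right; rewrite eAB => /esym.
have [j hj] := uniform_join_empty hu.
apply: fCD; apply: (@Gamma_eq_uniq j (f (join A emptyset))).
- by rewrite -(f_join_empty C hC); apply: hj.
- by rewrite -(f_join_empty D hD); apply: hj.
Qed.
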